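(* Let $R$ be a commutative ring in which $2$ is invertible and let $Q$ be a free $R$-module of rank $n$ with a fixed ordered basis. Let $\varphi'$ and $\varphi^*$ be invertible symmetric $n\times n$ matrices defining quadratic forms on $Q$, with $\varphi'=\epsilon^t\varphi^*\epsilon$ for some $\epsilon\in\mathrm{GL}_n(R)$. Let $M=Q\perp\mathbb{H}(R)$, with ordered basis the basis of $Q$ followed by $x,f$, and endow $M$ with the forms of matrices $\varphi'\perp\psi_1$ and $\varphi^*\perp\psi_1$ respectively, where $\psi_1=\begin{pmatrix}0&1\\1&0\end{pmatrix}$. Then, as groups of $(n+2)\times(n+2)$ matrices, $\mathrm{ETransO}(M,\langle\,,\,\rangle_{\varphi'\perp\psi_1})=(\epsilon^{-1}\perp I_2)\,\mathrm{ETransO}(M,\langle\,,\,\rangle_{\varphi^*\perp\psi_1})\,(\epsilon\perp I_2)$.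
   Context: For an invertible symmetric matrix $\varphi$ on $Q$, $\langle a,b\rangle_\varphi=a^t\varphi b$ in coordinates and $q_\varphi(a)=\tfrac12\langle a,a\rangle_\varphi$. $\mathbb{H}(R)=Rx\oplus Rf$ with $\langle x,f\rangle=1$, $\langle x,x\rangle=\langle f,f\rangle=0$. For the form $\varphi\perp\psi_1$ on $M$ and $w\in Q$, writing elements as $(z,ax+bf)$, the elementary orthogonal transvections are $E^w_1(z,ax+bf)=(z-bw,\,(a+\langle z,w\rangle_\varphi-bq_\varphi(w))x+bf)$ and $E^w_2(z,ax+bf)=(z-aw,\,ax+(b+\langle z,w\rangle_\varphi-aq_\varphi(w))f)$; $\mathrm{ETransO}(M,\langle\,,\,\rangle_{\varphi\perp\psi_1})$ is the group generated by all $E^w_1,E^w_2$, $w\in Q$. *)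

From HB Require Import structures.
From mathcomp Require Import all_boot all_order all_algebra.
Set Implicit Arguments. Unset Strict Implicit. Unset Printing Implicit Defensive.
Import GRing.Theory.
Local Open Scope ring_scope.

Section Transvections.
Variables (R : comUnitRingType) (n : nat).

Definition bform (phi : 'M[R]_n) (a b : 'cV[R]_n) : R := (a^T *m phi *m b) 0 0.

Definition qform (phi : 'M[R]_n) (a : 'cV[R]_n) : R := 2^-1 * bform phi a a.

(* Elements of M = Q _|_ H(R) are column vectors of size n+2: the coordinates
   z of the Q-part, followed by the coordinates a (of x) and b (of f). *)
Definition Mvec (z : 'cV[R]_n) (a b : R) : 'cV[R]_(n + 2) :=
  col_mx z (\col_(i < 2) (if i == ord0 then a else b)).

Definition zpart (v : 'cV[R]_(n + 2)) : 'cV[R]_n := usubmx v.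
Definition xcoord (v : 'cV[R]_(n + 2)) : R := (dsubmx v : 'cV[R]_2) ord0 0.
Definition fcoord (v : 'cV[R]_(n + 2)) : R := (dsubmx v : 'cV[R]_2) ord_max 0.

Definition E1act (phi : 'M[R]_n) (w : 'cV[R]_n) (v : 'cV[R]_(n + 2)) :=
  let z := zpart v in let a := xcoord v in let b := fcoord v in
  Mvec (z - b *: w) (a + bform phi z w - b * qform phi w) b.

Definition E2act (phi : 'M[R]_n) (w : 'cV[R]_n) (v : 'cV[R]_(n + 2)) :=
  let z := zpart v in let a := xcoord v in let b := fcoord v in
  Mvec (z - a *: w) a (b + bform phi z w - a * qform phi w).

Definition mx_of (f : 'cV[R]_(n + 2) -> 'cV[R]_(n + 2)) : 'M[R]_(n + 2) :=
  \matrix_(i, j) (f (delta_mx j 0)) i 0.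

Definition E1 phi w := mx_of (E1act phi w).
Definition E2 phi w := mx_of (E2act phi w).

Definition ETransO_gen (phi : 'M[R]_n) (g : 'M[R]_(n + 2)) : Prop :=
  exists w, g = E1 phi w \/ g = E2 phi w.

Inductive gen_group (S : 'M[R]_(n + 2) -> Prop) : 'M[R]_(n + 2) -> Prop :=
| gen_one : gen_group S 1%:M
| gen_mul g h : S g -> gen_group S h -> gen_group S (g *m h)
| gen_mulV g h : S g -> gen_group S h -> gen_group S (invmx g *m h).

(* ETransO(M, <,>_{phi _|_ psi_1}) *)
Definition ETransO (phi : 'M[R]_n) := gen_group (ETransO_gen phi).

Definition perpI2 (A : 'M[R]_n) : 'M[R]_(n + 2) := block_mx A 0 0 1%:M.

End Transvections.

(** The change of coordinates [z |-> eps z] on [Q], extended by the identity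
    on the hyperbolic plane, is an isometry from [phi' _|_ psi_1] to
    [phis _|_ psi_1] because [phi' = eps^T phis eps]. Conjugating by it sends
    the transvection [E^w_i] of [phi'] to the transvection [E^(eps w)_i] of
    [phis], so it maps the generators of one group bijectively onto those of
    the other, hence the groups onto each other. *)

From HB Require Import structures.
From mathcomp Require Import all_boot all_order all_algebra.
From mathcomp Require Import ring.
Import GRing.Theory.
Local Open Scope ring_scope.

Section Conjugation.
Variables (R : comUnitRingType) (m : nat) (P : 'M[R]_m).
Hypothesis unitP : P \in unitmx.

Lemma invmx_left (A B : 'M[R]_m) : B *m A = 1%:M -> invmx A = B.
Proof.
move=> BA; have [_ unitA] := mulmx1_unit BA.
by rewrite -[invmx A]mul1mx -BA -mulmxA mulmxV // mulmx1.
Qed.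

Lemma conj_mx1 : invmx P *m 1%:M *m P = 1%:M.
Proof. by rewrite mulmx1 mulVmx. Qed.

Lemma conj_mulmx (a b : 'M[R]_m) :
  (invmx P *m a *m P) *m (invmx P *m b *m P) = invmx P *m (a *m b) *m P.
Proof. by rewrite -!mulmxA mulKVmx // !mulmxA. Qed.

Lemma conj_invmx (g : 'M[R]_m) :
  invmx (invmx P *m g *m P) = invmx P *m invmx g *m P.
Proof.
have [unitg | Ng] := boolP (g \in unitmx).
  by apply: invmx_left; rewrite conj_mulmx mulVmx // conj_mx1.
have Nconj : invmx P *m g *m P \notin unitmx.
  by rewrite !unitmx_mul (negbTE Ng) andbF.
by rewrite [LHS]invmx_out ?inE // [invmx g]invmx_out ?inE.
Qed.

End Conjugation.

Section GeneratedGroupConjugation.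
Variables (R : comUnitRingType) (n : nat) (P : 'M[R]_(n + 2)).
Hypothesis unitP : P \in unitmx.

Lemma gen_group_conj (S T : 'M[R]_(n + 2) -> Prop) :
  (forall t, T t <-> exists2 s, S s & t = invmx P *m s *m P) ->
  forall g, gen_group T g <-> exists h, gen_group S h /\ g = invmx P *m h *m P.
Proof.
move=> TS g; split.
  elim=> [|t h /TS[s Ss ->] _ [h' [Sh' ->]]|t h /TS[s Ss ->] _ [h' [Sh' ->]]].
  - by exists 1%:M; split; [exact: gen_one | rewrite conj_mx1].
  - by exists (s *m h'); split; [exact: gen_mul | rewrite conj_mulmx].
  - exists (invmx s *m h'); split; first exact: gen_mulV.
    by rewrite conj_invmx // conj_mulmx.
case=> h [Sh ->]; elim: Sh => [|s h' Ss _ IH|s h' Ss _ IH].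
- by rewrite conj_mx1 //; exact: gen_one.
- by rewrite -conj_mulmx //; apply: gen_mul IH; apply/TS; exists s.
- rewrite -conj_mulmx // -conj_invmx //; apply: gen_mulV IH.
  by apply/TS; exists s.
Qed.

End GeneratedGroupConjugation.

Section MatrixOfMap.
Variables (R : comUnitRingType) (n : nat).
Implicit Types (f g : 'cV[R]_(n + 2) -> 'cV[R]_(n + 2)) (A B : 'M[R]_(n + 2)).

Lemma eq_mx_of f g : f =1 g -> mx_of f = mx_of g.
Proof. by move=> fg; apply/matrixP => i j; rewrite !mxE fg. Qed.

Lemma mx_of_mulmx A : mx_of (mulmx A) = A.
Proof. by apply/matrixP => i j; rewrite mxE -colE mxE. Qed.

Lemma col_mx_of f j : col j (mx_of f) = f (delta_mx j 0).
Proof. by apply/matrixP => i k; rewrite !mxE (ord1 k). Qed.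

Lemma mx_ofE (f : {linear 'cV[R]_(n + 2) -> 'cV[R]_(n + 2)}) v :
  mx_of f *m v = f v.
Proof.
have -> : v = \sum_(j < n + 2) v j 0 *: delta_mx j 0.
  by rewrite {1}(matrix_sum_delta v); apply: eq_bigr => j _; rewrite big_ord1.
rewrite mulmx_sumr linear_sum; apply: eq_bigr => j _.
by rewrite -scalemxAr -colE col_mx_of linearZ.
Qed.

Lemma mx_of_conj (f : {linear 'cV[R]_(n + 2) -> 'cV[R]_(n + 2)}) A B :
  mx_of (fun v => A *m f (B *m v)) = A *m mx_of f *m B.
Proof.
rewrite -[RHS]mx_of_mulmx; apply: eq_mx_of => v.
by rewrite -!mulmxA mx_ofE.
Qed.

End MatrixOfMap.

Section Transvections.
Variables (R : comUnitRingType) (n : nat).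
Implicit Types (phi : 'M[R]_n) (z w : 'cV[R]_n) (v : 'cV[R]_(n + 2)).

Lemma zpart_linear : linear (@zpart R n).
Proof. by move=> k u v; rewrite /zpart linearP. Qed.

Lemma xcoord_linear : scalar (@xcoord R n).
Proof. by move=> k u v; rewrite /xcoord linearP !mxE. Qed.

Lemma fcoord_linear : scalar (@fcoord R n).
Proof. by move=> k u v; rewrite /fcoord linearP !mxE. Qed.

Lemma bform_linear phi w : scalar (bform phi ^~ w).
Proof.
by move=> k z1 z2; rewrite /bform linearP /= !mulmxDl -!scalemxAl !mxE.
Qed.

Lemma MvecP k z1 z2 (a1 a2 b1 b2 : R) :
  Mvec (k *: z1 + z2) (k * a1 + a2) (k * b1 + b2) = k *: Mvec z1 a1 b1 + Mvec z2 a2 b2.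
Proof.
rewrite /Mvec scale_col_mx add_col_mx; congr col_mx.
by apply/matrixP => i j; rewrite !mxE; case: ifP.
Qed.

Lemma E1act_linear phi w : linear (E1act phi w).
Proof.
move=> k u v; rewrite /E1act.
rewrite zpart_linear xcoord_linear fcoord_linear bform_linear -MvecP.
by congr Mvec; [rewrite scalerDl -scalerA scalerBr addrACA opprD | ring].
Qed.

Lemma E2act_linear phi w : linear (E2act phi w).
Proof.
move=> k u v; rewrite /E2act.
rewrite zpart_linear xcoord_linear fcoord_linear bform_linear -MvecP.
by congr Mvec; [rewrite scalerDl -scalerA scalerBr addrACA opprD | ring].
Qed.

HB.instance Definition _ phi w :=
  GRing.isLinear.Build R _ _ _ (E1act phi w) (E1act_linear phi w).
HB.instance Definition _ phi w :=
  GRing.isLinear.Build R _ _ _ (E2act phi w) (E2act_linear phi w).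

End Transvections.

Section ChangeOfBasis.
Variables (R : comUnitRingType) (n : nat).
Implicit Types (phi A B : 'M[R]_n) (z w : 'cV[R]_n) (v : 'cV[R]_(n + 2)).

Lemma perpI2M A B : perpI2 A *m perpI2 B = perpI2 (A *m B).
Proof. by rewrite /perpI2 mulmx_block !mulmx0 !mul0mx !addr0 !add0r mulmx1. Qed.

Lemma perpI2_1 : perpI2 1%:M = 1%:M :> 'M[R]_(n + 2).
Proof. by rewrite /perpI2 -scalar_mx_block. Qed.

Lemma invmx_perpI2 A : A \in unitmx -> invmx (perpI2 A) = perpI2 (invmx A).
Proof. by move=> unitA; apply: invmx_left; rewrite perpI2M mulVmx // perpI2_1. Qed.

Lemma unitmx_perpI2 A : A \in unitmx -> perpI2 A \in unitmx.
Proof.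
move=> unitA; have [] // := @mulmx1_unit _ _ (perpI2 A) (perpI2 (invmx A)).
by rewrite perpI2M mulmxV // perpI2_1.
Qed.

Lemma perpI2_Mvec A z (a b : R) : perpI2 A *m Mvec z a b = Mvec (A *m z) a b.
Proof. by rewrite /perpI2 /Mvec mul_block_col !mul0mx addr0 add0r mul1mx. Qed.

Lemma zpart_perpI2 A v : zpart (perpI2 A *m v) = A *m zpart v.
Proof.
by rewrite -[v]vsubmxK /perpI2 mul_block_col !mul0mx addr0 /zpart !col_mxKu.
Qed.

Lemma xcoord_perpI2 A v : xcoord (perpI2 A *m v) = xcoord v.
Proof.
by rewrite -[v]vsubmxK /perpI2 mul_block_col !mul0mx add0r mul1mx /xcoord !col_mxKd.
Qed.

Lemma fcoord_perpI2 A v : fcoord (perpI2 A *m v) = fcoord v.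
Proof.
by rewrite -[v]vsubmxK /perpI2 mul_block_col !mul0mx add0r mul1mx /fcoord !col_mxKd.
Qed.

Lemma bform_mulmx phi A z w :
  bform phi (A *m z) (A *m w) = bform (A^T *m phi *m A) z w.
Proof. by rewrite /bform trmx_mul !mulmxA. Qed.

Lemma qform_mulmx phi A w : qform phi (A *m w) = qform (A^T *m phi *m A) w.
Proof. by rewrite /qform bform_mulmx. Qed.

Section Isometry.
Variable eps : 'M[R]_n.
Hypothesis unit_eps : eps \in unitmx.

Lemma E1act_conj phi w v :
  E1act (eps^T *m phi *m eps) w v
  = perpI2 (invmx eps) *m E1act phi (eps *m w) (perpI2 eps *m v).
Proof.
rewrite /E1act zpart_perpI2 xcoord_perpI2 fcoord_perpI2 perpI2_Mvec.
by rewrite bform_mulmx qform_mulmx mulmxBr -scalemxAr !mulKmx.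
Qed.

Lemma E2act_conj phi w v :
  E2act (eps^T *m phi *m eps) w v
  = perpI2 (invmx eps) *m E2act phi (eps *m w) (perpI2 eps *m v).
Proof.
rewrite /E2act zpart_perpI2 xcoord_perpI2 fcoord_perpI2 perpI2_Mvec.
by rewrite bform_mulmx qform_mulmx mulmxBr -scalemxAr !mulKmx.
Qed.

Lemma E1_conj phi w :
  E1 (eps^T *m phi *m eps) w
  = invmx (perpI2 eps) *m E1 phi (eps *m w) *m perpI2 eps.
Proof.
by rewrite invmx_perpI2 // -mx_of_conj; apply: eq_mx_of => v; apply: E1act_conj.
Qed.

Lemma E2_conj phi w :
  E2 (eps^T *m phi *m eps) w
  = invmx (perpI2 eps) *m E2 phi (eps *m w) *m perpI2 eps.
Proof.
by rewrite invmx_perpI2 // -mx_of_conj; apply: eq_mx_of => v; apply: E2act_conj.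
Qed.

Lemma ETransO_gen_conj phi t :
  ETransO_gen (eps^T *m phi *m eps) t
  <-> exists2 s, ETransO_gen phi s & t = invmx (perpI2 eps) *m s *m perpI2 eps.
Proof.
split=> [[w [->|->]] | [s [w [->|->]] ->]].
- by exists (E1 phi (eps *m w)); [exists (eps *m w); left | exact: E1_conj].
- by exists (E2 phi (eps *m w)); [exists (eps *m w); right | exact: E2_conj].
- by exists (invmx eps *m w); left; rewrite E1_conj mulKVmx.
- by exists (invmx eps *m w); right; rewrite E2_conj mulKVmx.
Qed.

End Isometry.
End ChangeOfBasis.

Theorem mainTheorem12 (R : comUnitRingType) (n : nat)
  (phi' phis eps : 'M[R]_n) :
  (2 : R) \is a GRing.unit ->
  phi'^T = phi' -> phi' \in unitmx ->
  phis^T = phis -> phis \in unitmx ->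
  eps \in unitmx ->
  phi' = eps^T *m phis *m eps ->
  forall g : 'M[R]_(n + 2),
    ETransO phi' g <->
    exists h, ETransO phis h /\ g = perpI2 (invmx eps) *m h *m perpI2 eps.
Proof.
move=> _ _ _ _ _ unit_eps -> g.
rewrite -invmx_perpI2 //.
apply: gen_group_conj; first exact: unitmx_perpI2.
exact: ETransO_gen_conj.
Qed.
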